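(* Let $\alpha\in(0,1/2)$ and $H\in C^{2\alpha}([0,1])\cap D_\alpha$. For $M\ge2$, $y_l=l/M$, $\delta=1/M$, let $H_k:=\frac1M\sum_{l=1}^{M-1}H(y_l)e_k(y_l)$ and $H^M:=\sum_{k=1}^{M-1}H_ke_k$. Then there is a constant $C>0$ (independent of $H$ and $M$) such that $$\|H-H^M\|^2_{L^2}\le CK^2\delta^{\frac{8\alpha^2}{4\alpha+1}},\qquad K:=\max\big(\|H\|_\infty,\|H\|_{C^{2\alpha}},\|H\|_{D_\alpha}\big).$$
   Context: $e_k(y)=\sqrt2\sin(\pi ky)$, $\lambda_k=\vartheta\pi^2k^2$ for a fixed $\vartheta>0$; $D_\alpha=\{u\in L^2((0,1)):\sum_k\lambda_k^{2\alpha}\langle u,e_k\rangle^2<\infty\}$ with norm $\|u\|_{D_\alpha}=(\sum_k\lambda_k^{2\alpha}\langle u,e_k\rangle_{L^2}^2)^{1/2}$; $C^{2\alpha}([0,1])$ the Hölder space with norm $\|u\|_\infty+\sup_{x\ne y}|u(x)-u(y)|/|x-y|^{2\alpha}$; $\|\cdot\|_{L^2}$ the norm of $L^2((0,1))$. *)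

From Stdlib Require Import Reals.
From Coquelicot Require Import Coquelicot.
Open Scope R_scope.

Definition ek (k : nat) (y : R) : R := sqrt 2 * sin (PI * INR k * y).
Definition lambda (theta : R) (k : nat) : R := theta * PI ^ 2 * INR k ^ 2.

(* L^2((0,1)) inner product and squared norm (Riemann integral; all functions
   to which these are applied below are continuous on [0,1]). *)
Definition L2inner (u v : R -> R) : R := RInt (fun y => u y * v y) 0 1.
Definition L2norm_sq (u : R -> R) : R := RInt (fun y => (u y) ^ 2) 0 1.

Definition Dterm (theta alpha : R) (u : R -> R) (n : nat) : R :=
  Rpower (lambda theta (S n)) (2 * alpha) * (L2inner u (ek (S n))) ^ 2.
Definition in_D (theta alpha : R) (u : R -> R) : Prop :=
  ex_series (Dterm theta alpha u).
Definition Dnorm (theta alpha : R) (u : R -> R) : R :=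
  sqrt (Series (Dterm theta alpha u)).

Definition supnorm (u : R -> R) : R :=
  real (Lub_Rbar (fun r => exists x, 0 <= x <= 1 /\ r = Rabs (u x))).

Definition in_holder (beta : R) (u : R -> R) : Prop :=
  exists L : R, forall x y, 0 <= x <= 1 -> 0 <= y <= 1 ->
    Rabs (u x - u y) <= L * Rpower (Rabs (x - y)) beta.
Definition holder_seminorm (beta : R) (u : R -> R) : R :=
  real (Lub_Rbar (fun r => exists x y, 0 <= x <= 1 /\ 0 <= y <= 1 /\ x <> y /\
          r = Rabs (u x - u y) / Rpower (Rabs (x - y)) beta)).
Definition holder_norm (beta : R) (u : R -> R) : R :=
  supnorm u + holder_seminorm beta u.

Definition Hcoef (M : nat) (H : R -> R) (k : nat) : R :=
  / INR M * sum_n_m (fun l => H (INR l / INR M) * ek k (INR l / INR M)) 1 (M - 1).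
Definition HM (M : nat) (H : R -> R) (y : R) : R :=
  sum_n_m (fun k => Hcoef M H k * ek k y) 1 (M - 1).

(** For [H] Hoelder of exponent [2 alpha] on [[0, 1]] and [M >= 2], the
    discrete sine interpolant [H^M = sum_{k<M} H_k e_k] (with [H_k] the
    discrete sine coefficients at the nodes [y_l = l/M]) satisfies
    [||H - H^M||^2 <= 6 K^2 delta^{4 alpha} + 10 K^2 delta], [delta = 1/M],
    which is below [16 K^2 delta^{8 alpha^2 / (4 alpha + 1)}].

    The argument is purely discrete.
    - Discrete orthogonality of the sines at the interior nodes shows that
      [H^M] interpolates [H] at every node [y_1, ..., y_{M-1}].
    - Write [||H - H^M||^2] as the integral over the first cell [[0, 1/M]] of
      the sum over the [M] translates [y_l + t].  At each translate, compare
      both [H] and [H^M] with the node value [H^M(y_l)].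
    - [H(y_l + t) - H(y_l)] is controlled by the Hoelder modulus.
    - [H^M(y_l + t) - H^M(y_l)]: a discrete Parseval identity on the doubled
      grid [0 .. 2M-1] makes the energy of these increments diagonal in the
      frequency, with weights [sin^2(pi k t / 2)] increasing in [t <= 1/M];
      so they are dominated by the node-to-node increments of [H], i.e. again
      by the Hoelder modulus, plus boundary terms bounded by [sup |H|]. *)

From Stdlib Require Import Reals Lra Lia.
From Coquelicot Require Import Coquelicot.
Open Scope R_scope.

Lemma sumR_ext (a b : nat -> R) n m :
  (forall k, (n <= k <= m)%nat -> a k = b k) -> sum_n_m a n m = sum_n_m b n m.
Proof. apply sum_n_m_ext_loc. Qed.

Lemma sumR_last (a : nat -> R) n m :
  (n <= S m)%nat -> sum_n_m a n (S m) = sum_n_m a n m + a (S m).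
Proof. intros; now rewrite sum_n_Sm. Qed.

Lemma sumR_first (a : nat -> R) n m :
  (n <= m)%nat -> sum_n_m a n m = a n + sum_n_m a (S n) m.
Proof. intros; now rewrite sum_Sn_m. Qed.

Lemma sumR_empty (a : nat -> R) n m : (m < n)%nat -> sum_n_m a n m = 0.
Proof. intros; now rewrite sum_n_m_zero. Qed.

Lemma sumR_zero (a : nat -> R) n m :
  (forall k, (n <= k <= m)%nat -> a k = 0) -> sum_n_m a n m = 0.
Proof.
  intros Ha; rewrite (sumR_ext a (fun _ => 0)) by exact Ha.
  apply (sum_n_m_const_zero (G := R_AbelianMonoid)).
Qed.

Lemma sumR_plus (a b : nat -> R) n m :
  sum_n_m (fun k => a k + b k) n m = sum_n_m a n m + sum_n_m b n m.
Proof. apply (sum_n_m_plus (G := R_AbelianMonoid)). Qed.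

Lemma sumR_scal_l (c : R) (a : nat -> R) n m :
  sum_n_m (fun k => c * a k) n m = c * sum_n_m a n m.
Proof. apply (sum_n_m_mult_l (K := R_Ring)). Qed.

Lemma sumR_scal_r (c : R) (a : nat -> R) n m :
  sum_n_m (fun k => a k * c) n m = sum_n_m a n m * c.
Proof. apply (sum_n_m_mult_r (K := R_Ring)). Qed.

Lemma sumR_opp (a : nat -> R) n m :
  @eq R (sum_n_m (fun k => - a k) n m) (- sum_n_m a n m).
Proof.
  rewrite (sumR_ext _ (fun k => -1 * a k)) by (intros; ring).
  rewrite sumR_scal_l. ring.
Qed.

Lemma sumR_minus (a b : nat -> R) n m :
  sum_n_m (fun k => a k - b k) n m = sum_n_m a n m - sum_n_m b n m.
Proof. unfold Rminus; rewrite sumR_plus, sumR_opp; reflexivity. Qed.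

Lemma sumR_const (c : R) n m : sum_n_m (fun _ => c) n m = INR (S m - n) * c.
Proof. apply sum_n_m_const. Qed.

Lemma sumR_le (a b : nat -> R) n m :
  (forall k, (n <= k <= m)%nat -> a k <= b k) -> sum_n_m a n m <= sum_n_m b n m.
Proof.
  intros Hab; induction m as [|m IH].
  - destruct n.
    + rewrite !sum_n_n; apply Hab; lia.
    + rewrite !sumR_empty by lia; lra.
  - destruct (Nat.le_gt_cases n (S m)) as [Hn|Hn].
    + destruct (Nat.eq_dec n (S m)) as [->|Hne].
      * rewrite !sum_n_n; apply Hab; lia.
      * rewrite !sumR_last by lia.
        apply Rplus_le_compat; [apply IH; intros; apply Hab; lia | apply Hab; lia].
    + rewrite !sumR_empty by lia; lra.
Qed.

Lemma sumR_nonneg (a : nat -> R) n m :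
  (forall k, (n <= k <= m)%nat -> 0 <= a k) -> 0 <= sum_n_m a n m.
Proof.
  intros Ha; rewrite <- (sumR_zero (fun _ => 0) n m) by reflexivity.
  apply sumR_le; exact Ha.
Qed.

Lemma sumR_swap (u : nat -> nat -> R) a b c d :
  sum_n_m (fun i => sum_n_m (u i) c d) a b
  = sum_n_m (fun j => sum_n_m (fun i => u i j) a b) c d.
Proof.
  induction b as [|b IH].
  - destruct a.
    + rewrite sum_n_n; apply sumR_ext; intros; rewrite sum_n_n; reflexivity.
    + rewrite sumR_empty by lia; symmetry.
      apply sumR_zero; intros; apply sumR_empty; lia.
  - destruct (Nat.le_gt_cases a (S b)).
    + rewrite sumR_last, IH, <- sumR_plus by lia.
      apply sumR_ext; intros; rewrite sumR_last by lia; reflexivity.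
    + rewrite sumR_empty by lia; symmetry.
      apply sumR_zero; intros; apply sumR_empty; lia.
Qed.

Lemma sumR_delta (x : R) (l a b : nat) : (a <= l <= b)%nat ->
  @eq R (sum_n_m (fun k => if Nat.eqb k l then x else 0) a b) x.
Proof.
  intros Hl; induction b as [|b IH].
  - assert (a = 0 /\ l = 0)%nat as [-> ->] by lia; rewrite sum_n_n; reflexivity.
  - rewrite sumR_last by lia.
    destruct (Nat.eq_dec l (S b)) as [->|Hne].
    + rewrite Nat.eqb_refl, sumR_zero; [ring|].
      intros k Hk; destruct (Nat.eqb_spec k (S b)); [lia | reflexivity].
    + rewrite IH by lia; destruct (Nat.eqb_spec (S b) l); [lia | ring].
Qed.

Lemma sumR_square (a : nat -> R) n m :
  (sum_n_m a n m) ^ 2 = sum_n_m (fun j => sum_n_m (fun k => a j * a k) n m) n m.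
Proof.
  simpl pow; rewrite Rmult_1_r, <- sumR_scal_r.
  apply sumR_ext; intros; rewrite <- sumR_scal_l; reflexivity.
Qed.

Lemma sumR_shift (f : nat -> R) a b n :
  sum_n_m (fun l => f (l + n)%nat) a b = sum_n_m f (a + n) (b + n).
Proof.
  revert f; induction n as [|n IH]; intros f.
  - rewrite !Nat.add_0_r; apply sumR_ext; intros; rewrite Nat.add_0_r; reflexivity.
  - rewrite <- !plus_n_Sm, <- sum_n_m_S, <- IH.
    apply sumR_ext; intros; rewrite <- plus_n_Sm; reflexivity.
Qed.

Lemma sumR_reverse (f : nat -> R) n :
  sum_n_m f 0 n = sum_n_m (fun l => f (n - l)%nat) 0 n.
Proof.
  revert f; induction n as [|n IH]; intros f; [rewrite !sum_n_n; reflexivity|].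
  rewrite sumR_first, <- sum_n_m_S, IH, (sumR_last _ 0 n) by lia.
  rewrite Nat.sub_diag, Rplus_comm; f_equal.
  apply sumR_ext; intros l Hl; f_equal; lia.
Qed.

Lemma two_sin_cos a b : 2 * sin b * cos a = sin (a + b) - sin (a - b).
Proof. rewrite sin_plus, sin_minus; ring. Qed.

Lemma two_cos_cos a b : 2 * cos a * cos b = cos (a - b) + cos (a + b).
Proof. rewrite cos_plus, cos_minus; ring. Qed.

Lemma two_sin_sin a b : 2 * sin a * sin b = cos (a - b) - cos (a + b).
Proof. rewrite cos_plus, cos_minus; ring. Qed.

Lemma sin_INR_PI n : sin (INR n * PI) = 0.
Proof.
  induction n as [|n IH]; [rewrite Rmult_0_l; apply sin_0|].
  rewrite S_INR, Rmult_plus_distr_r, Rmult_1_l, sin_plus, IH, sin_PI; ring.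
Qed.

Lemma cos_INR_PI n : cos (INR n * PI) = (-1) ^ n.
Proof.
  induction n as [|n IH]; [rewrite Rmult_0_l; apply cos_0|].
  rewrite S_INR, Rmult_plus_distr_r, Rmult_1_l, cos_plus, IH, sin_PI, cos_PI; simpl; ring.
Qed.

Lemma neg1_pow_even l : (-1) ^ (2 * l) = 1.
Proof. rewrite pow_sqr; replace (-1 * -1) with 1 by ring; apply pow1. Qed.

Lemma cos_sum_telescope th ph L :
  2 * sin (th / 2) * sum_n_m (fun l => cos (INR l * th + ph)) 0 L
  = sin ((INR L + / 2) * th + ph) - sin (ph - th / 2).
Proof.
  induction L as [|L IH].
  - rewrite sum_n_n, two_sin_cos; simpl; f_equal; f_equal; field.
  - rewrite sumR_last, Rmult_plus_distr_l, IH, two_sin_cos, S_INR by lia.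
    replace ((INR L + 1) * th + ph - th / 2) with ((INR L + / 2) * th + ph) by field.
    replace ((INR L + 1) * th + ph + th / 2) with ((INR L + 1 + / 2) * th + ph) by field.
    ring.
Qed.

(** For [0 < n < 2M] the half angle [pi n / (2M)] lies in [(0, pi)]. *)
Lemma sin_half_angle_pos (M n : nat) :
  (0 < n < 2 * M)%nat -> 0 < sin (PI * INR n / INR M / 2).
Proof.
  intros Hn.
  assert (0 < INR M) by (apply lt_0_INR; lia).
  assert (0 < INR n) by (apply lt_0_INR; lia).
  assert (INR n < 2 * INR M)
    by (replace 2 with (INR 2) by reflexivity; rewrite <- mult_INR; apply lt_INR; lia).
  pose proof PI_RGT_0.
  apply sin_gt_0.
  - apply Rmult_lt_0_compat; [apply Rdiv_lt_0_compat; nra | lra].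
  - apply (Rmult_lt_reg_r (2 * INR M)); [lra|]. field_simplify; nra.
Qed.

(** A full period of cosines sums to zero: the [2M] angles [l pi n / M]
    ([0 < n < 2M]) wrap around the circle [n] times. *)
Lemma cos_sum_full_period (M n : nat) ph : (0 < n < 2 * M)%nat ->
  sum_n_m (fun l => cos (INR l * (PI * INR n / INR M) + ph)) 0 (2 * M - 1) = 0.
Proof.
  intros Hn; set (th := PI * INR n / INR M).
  pose proof (sin_half_angle_pos M n Hn) as Hs; fold th in Hs.
  pose proof (cos_sum_telescope th ph (2 * M - 1)) as Htel.
  assert (0 < INR M) by (apply lt_0_INR; lia).
  assert (Hend : (INR (2 * M - 1) + / 2) * th + ph = (ph - th / 2) + 2 * INR n * PI).
  { rewrite minus_INR, mult_INR by lia; unfold th; simpl; field; lra. }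
  rewrite Hend, sin_period in Htel.
  apply (Rmult_eq_reg_l (2 * sin (th / 2))); lra.
Qed.

Lemma cos_sum_half_period (M n : nat) : (0 < n < 2 * M)%nat ->
  sum_n_m (fun k => cos (INR k * (PI * INR n / INR M))) 1 (M - 1)
  = - (1 + (-1) ^ n) / 2.
Proof.
  intros Hn; set (th := PI * INR n / INR M).
  pose proof (sin_half_angle_pos M n Hn) as Hs; fold th in Hs.
  pose proof (cos_sum_telescope th 0 (M - 1)) as Htel.
  assert (0 < INR M) by (apply lt_0_INR; lia).
  rewrite (sumR_ext _ (fun l => cos (INR l * th))) in Htel by (intros; rewrite Rplus_0_r; reflexivity).
  assert (Hend : (INR (M - 1) + / 2) * th + 0 = INR n * PI - th / 2).
  { rewrite minus_INR by lia; unfold th; simpl; field; lra. }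
  rewrite Hend, sin_minus, sin_INR_PI, cos_INR_PI, sumR_first in Htel by lia.
  simpl in Htel; rewrite Rmult_0_l, cos_0, Rminus_0_l, sin_neg in Htel.
  apply (Rmult_eq_reg_l (2 * sin (th / 2))); [|lra].
  set (Sc := sum_n_m (fun l => cos (INR l * th)) 1 (M - 1)) in *.
  replace (2 * sin (th / 2) * Sc) with (2 * sin (th / 2) * (1 + Sc) - 2 * sin (th / 2)) by ring.
  rewrite Htel; field.
Qed.

Local Notation node M l := (INR l / INR M).

Lemma ek_mul k x y :
  ek k x * ek k y = cos (PI * INR k * x - PI * INR k * y) - cos (PI * INR k * x + PI * INR k * y).
Proof.
  unfold ek; rewrite <- two_sin_sin.
  replace 2 with (sqrt 2 * sqrt 2) at 3 by (apply sqrt_sqrt; lra); ring.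
Qed.

Section Mesh.

Variable M : nat.
Hypothesis M_ge2 : (2 <= M)%nat.

Let M_pos : 0 < INR M.
Proof. apply lt_0_INR; lia. Qed.

Lemma sine_node_orthogonality_le (m l : nat) : (1 <= l <= m)%nat -> (m <= M - 1)%nat ->
  @eq R (sum_n_m (fun k => ek k (node M m) * ek k (node M l)) 1 (M - 1))
        (if Nat.eqb m l then INR M else 0).
Proof.
  intros Hl Hm.
  rewrite (sumR_ext _ (fun k => cos (INR k * (PI * INR (m - l) / INR M))
                                - cos (INR k * (PI * INR (m + l) / INR M)))).
  2: { intros k _; rewrite ek_mul, minus_INR, plus_INR by lia; f_equal; f_equal; field; lra. }
  rewrite sumR_minus, (cos_sum_half_period M (m + l)) by lia.
  destruct (Nat.eqb_spec m l) as [->|Hne].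
  - rewrite Nat.sub_diag, (sumR_ext _ (fun _ => 1)).
    2: { intros; simpl; rewrite Rmult_0_r, Rdiv_0_l, Rmult_0_r; apply cos_0. }
    rewrite sumR_const; replace (l + l)%nat with (2 * l)%nat by lia.
    rewrite neg1_pow_even, minus_INR, S_INR, minus_INR by lia; simpl; field.
  - rewrite (cos_sum_half_period M (m - l)) by lia.
    replace (m + l)%nat with ((m - l) + 2 * l)%nat by lia.
    rewrite pow_add, neg1_pow_even; field.
Qed.

Lemma sine_node_orthogonality (m l : nat) :
  (1 <= l <= M - 1)%nat -> (1 <= m <= M - 1)%nat ->
  @eq R (sum_n_m (fun k => ek k (node M m) * ek k (node M l)) 1 (M - 1))
        (if Nat.eqb m l then INR M else 0).
Proof.
  intros Hl Hm; destruct (Nat.le_gt_cases l m).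
  - apply sine_node_orthogonality_le; lia.
  - rewrite (sumR_ext _ (fun k => ek k (node M l) * ek k (node M m))) by (intros; ring).
    rewrite sine_node_orthogonality_le by lia.
    destruct (Nat.eqb_spec l m), (Nat.eqb_spec m l); lia || reflexivity.
Qed.

Lemma HM_interpolates (H : R -> R) (l : nat) : (1 <= l <= M - 1)%nat ->
  HM M H (node M l) = H (node M l).
Proof.
  intros Hl; unfold HM, Hcoef.
  rewrite (sumR_ext _ (fun k => / INR M * sum_n_m
             (fun m => H (node M m) * (ek k (node M m) * ek k (node M l))) 1 (M - 1))).
  2: { intros k _; rewrite Rmult_assoc, <- sumR_scal_r; f_equal.
       apply sumR_ext; intros; ring. }
  rewrite sumR_scal_l, sumR_swap.
  rewrite (sumR_ext _ (fun m => if Nat.eqb m l then H (node M l) * INR M else 0)).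
  2: { intros m Hm; rewrite sumR_scal_l, sine_node_orthogonality by lia.
       destruct (Nat.eqb_spec m l) as [->|]; ring. }
  rewrite sumR_delta by lia; field; lra.
Qed.


Lemma shifted_cos_orthogonality_lt (j k : nat) (p q : R) :
  (1 <= k < j)%nat -> (j <= M - 1)%nat ->
  @eq R (sum_n_m (fun l => cos (INR l * (PI * INR j / INR M) + p)
                           * cos (INR l * (PI * INR k / INR M) + q)) 0 (2 * M - 1)) 0.
Proof.
  intros Hk Hj.
  rewrite (sumR_ext _ (fun l => / 2 * (cos (INR l * (PI * INR (j - k) / INR M) + (p - q))
                                       + cos (INR l * (PI * INR (j + k) / INR M) + (p + q))))).
  2: { intros l _; rewrite minus_INR, plus_INR by lia.
       set (a := INR l * (PI * INR j / INR M) + p).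
       set (b := INR l * (PI * INR k / INR M) + q).
       replace (INR l * (PI * (INR j - INR k) / INR M) + (p - q)) with (a - b)
         by (unfold a, b; field; lra).
       replace (INR l * (PI * (INR j + INR k) / INR M) + (p + q)) with (a + b)
         by (unfold a, b; field; lra).
       rewrite <- two_cos_cos; field. }
  rewrite sumR_scal_l, sumR_plus, !cos_sum_full_period by lia; ring.
Qed.

Lemma shifted_cos_orthogonality (j k : nat) (ph : nat -> R) :
  (1 <= j <= M - 1)%nat -> (1 <= k <= M - 1)%nat ->
  @eq R (sum_n_m (fun l => cos (INR l * (PI * INR j / INR M) + ph j)
                           * cos (INR l * (PI * INR k / INR M) + ph k)) 0 (2 * M - 1))
        (if Nat.eqb j k then INR M else 0).
Proof.
  intros Hj Hk; destruct (Nat.eqb_spec j k) as [<-|Hne].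
  - rewrite (sumR_ext _ (fun l => / 2 * (1 + cos (INR l * (PI * INR (j + j) / INR M)
                                                   + (ph j + ph j))))).
    2: { intros l _; rewrite plus_INR.
         set (a := INR l * (PI * INR j / INR M) + ph j).
         replace (INR l * (PI * (INR j + INR j) / INR M) + (ph j + ph j)) with (a + a)
           by (unfold a; field; lra).
         rewrite <- cos_0; replace 0 with (a - a) by ring.
         rewrite <- two_cos_cos; field. }
    rewrite sumR_scal_l, sumR_plus, cos_sum_full_period, sumR_const by lia.
    replace (S (2 * M - 1) - 0)%nat with (2 * M)%nat by lia.
    rewrite mult_INR; simpl; field.
  - destruct (Nat.le_gt_cases j k).
    + rewrite (sumR_ext _ (fun l => cos (INR l * (PI * INR k / INR M) + ph k)
                                    * cos (INR l * (PI * INR j / INR M) + ph j))) by (intros; ring).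
      apply shifted_cos_orthogonality_lt; lia.
    + apply shifted_cos_orthogonality_lt; lia.
Qed.

Lemma shifted_cos_parseval (c ph : nat -> R) :
  sum_n_m (fun l => (sum_n_m (fun k => c k * cos (INR l * (PI * INR k / INR M) + ph k)) 1 (M - 1)) ^ 2)
          0 (2 * M - 1)
  = INR M * sum_n_m (fun k => c k ^ 2) 1 (M - 1).
Proof.
  rewrite (sumR_ext _ (fun l => sum_n_m (fun j => sum_n_m (fun k => c j * c k *
     (cos (INR l * (PI * INR j / INR M) + ph j) * cos (INR l * (PI * INR k / INR M) + ph k)))
       1 (M - 1)) 1 (M - 1))).
  2: { intros l _; rewrite sumR_square; apply sumR_ext; intros; apply sumR_ext; intros; ring. }
  rewrite sumR_swap, <- sumR_scal_l; apply sumR_ext; intros j Hj.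
  rewrite sumR_swap.
  rewrite (sumR_ext _ (fun k => if Nat.eqb k j then INR M * c j ^ 2 else 0)).
  2: { intros k Hk; rewrite sumR_scal_l, shifted_cos_orthogonality by lia.
       destruct (Nat.eqb_spec j k), (Nat.eqb_spec k j); subst; lia || ring. }
  apply sumR_delta; lia.
Qed.

Definition sine_poly (s : nat -> R) (y : R) : R := sum_n_m (fun k => s k * ek k y) 1 (M - 1).

Lemma increment_energy (s : nat -> R) (t : R) :
  sum_n_m (fun l => (sine_poly s (node M l + t) - sine_poly s (node M l)) ^ 2) 0 (2 * M - 1)
  = INR M * sum_n_m (fun k => (2 * sqrt 2 * s k * sin (PI * INR k * t / 2)) ^ 2) 1 (M - 1).
Proof.
  rewrite <- (shifted_cos_parseval (fun k => 2 * sqrt 2 * s k * sin (PI * INR k * t / 2))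
                                   (fun k => PI * INR k * t / 2)).
  apply sumR_ext; intros l _; f_equal.
  unfold sine_poly; rewrite <- sumR_minus; apply sumR_ext; intros k _; unfold ek.
  set (a := INR l * (PI * INR k / INR M) + PI * INR k * t / 2).
  set (b := PI * INR k * t / 2).
  replace (PI * INR k * (node M l + t)) with (a + b) by (unfold a, b; field; lra).
  replace (PI * INR k * node M l) with (a - b) by (unfold a, b; field; lra).
  replace (2 * sqrt 2 * s k * sin b * cos a) with (sqrt 2 * s k * (2 * sin b * cos a)) by ring.
  rewrite two_sin_cos; ring.
Qed.

(** Since [pi k t / 2 <= pi / 2] for [k < M] and [t <= 1/M], each mode's
    contribution grows with the shift: shifting by [t <= 1/M] costs at most
    shifting by one full mesh step. *)
Lemma increment_energy_mono (s : nat -> R) (t : R) : 0 <= t <= / INR M ->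
  sum_n_m (fun l => (sine_poly s (node M l + t) - sine_poly s (node M l)) ^ 2) 0 (2 * M - 1)
  <= sum_n_m (fun l => (sine_poly s (node M l + / INR M) - sine_poly s (node M l)) ^ 2)
             0 (2 * M - 1).
Proof.
  intros Ht; rewrite !increment_energy.
  apply Rmult_le_compat_l; [lra|]; apply sumR_le; intros k Hk.
  rewrite !Rpow_mult_distr; apply Rmult_le_compat_l; [apply Rmult_le_pos; [apply Rmult_le_pos|]; apply pow2_ge_0|].
  assert (INR k <= INR M - 1)
    by (change 1 with (INR 1); rewrite <- minus_INR by lia; apply le_INR; lia).
  assert (1 <= INR k) by (apply (le_INR 1); lia).
  pose proof PI_RGT_0.
  assert (Hlo : 0 <= PI * INR k * t / 2) by (apply Rmult_le_pos; [|lra]; apply Rmult_le_pos; nra).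
  assert (Hmid : PI * INR k * t / 2 <= PI * INR k * / INR M / 2)
    by (apply Rmult_le_compat_r; [lra|]; apply Rmult_le_compat_l; [nra | lra]).
  assert (Hhi : PI * INR k * / INR M / 2 <= PI / 2).
  { apply Rmult_le_compat_r; [lra|]; rewrite Rmult_assoc.
    rewrite <- (Rmult_1_r PI) at 2; apply Rmult_le_compat_l; [lra|].
    apply (Rmult_le_reg_r (INR M)); [lra|]; field_simplify; lra. }
  apply pow_incr; split; [apply sin_ge_0 | apply sin_incr_1]; lra.
Qed.

Lemma sum_doubled_grid_symmetric (D : nat -> R) :
  (forall l, (l <= M - 1)%nat -> D (2 * M - 1 - l)%nat = D l) ->
  @eq R (sum_n_m D 0 (2 * M - 1)) (2 * sum_n_m D 0 (M - 1)).
Proof.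
  intros Hsym.
  rewrite (sum_n_m_Chasles _ 0 (M - 1) (2 * M - 1)) by lia.
  replace (S (M - 1)) with (0 + M)%nat by lia.
  replace (2 * M - 1)%nat with (M - 1 + M)%nat by lia.
  rewrite <- sumR_shift, (sumR_reverse (fun l => D (l + M)%nat)).
  rewrite (sumR_ext (fun l => D (M - 1 - l + M)%nat) D).
  - change (plus ?x ?y) with (x + y); ring.
  - intros l Hl; rewrite <- (Hsym l) by lia; f_equal; lia.
Qed.

Lemma sine_poly_at_0 (s : nat -> R) : sine_poly s 0 = 0.
Proof. apply sumR_zero; intros; unfold ek; rewrite Rmult_0_r, sin_0; ring. Qed.

Lemma sine_poly_at_1 (s : nat -> R) : sine_poly s 1 = 0.
Proof.
  apply sumR_zero; intros; unfold ek.
  rewrite Rmult_1_r, (Rmult_comm PI), sin_INR_PI; ring.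
Qed.

Lemma sine_poly_reflect (s : nat -> R) (l : nat) : (l <= 2 * M)%nat ->
  sine_poly s (node M (2 * M - l)) = - sine_poly s (node M l).
Proof.
  intros Hl; unfold sine_poly; rewrite <- sumR_opp; apply sumR_ext; intros k _; unfold ek.
  replace (PI * INR k * node M (2 * M - l))
    with (- (PI * INR k * node M l) + 2 * INR k * PI)
    by (rewrite minus_INR, mult_INR by lia; simpl; field; lra).
  rewrite sin_period, sin_neg; ring.
Qed.

(** Squared increments over the doubled grid of a sequence vanishing at [0]
    and [M] and odd about [M]: the two boundary increments on each half are
    controlled by the values ([<= B]), the interior ones by [A]. *)
Lemma grid_increment_bound (V : nat -> R) (A B : R) : 0 <= A -> 0 <= B ->
  V 0%nat = 0 -> V M = 0 -> (forall l, (l <= M)%nat -> V (2 * M - l)%nat = - V l) ->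
  (forall l, (1 <= l <= M - 1)%nat -> V l ^ 2 <= B) ->
  (forall l, (1 <= l)%nat -> (l + 1 <= M - 1)%nat -> (V (S l) - V l) ^ 2 <= A) ->
  sum_n_m (fun l => (V (S l) - V l) ^ 2) 0 (2 * M - 1) <= 2 * INR M * A + 4 * B.
Proof.
  intros HA HB V0 VM Vodd Vval Vinc.
  rewrite sum_doubled_grid_symmetric.
  2: { intros l Hl.
       replace (S (2 * M - 1 - l)) with (2 * M - l)%nat by lia.
       replace (2 * M - 1 - l)%nat with (2 * M - S l)%nat by lia.
       rewrite !Vodd by lia; ring. }
  assert (Hhalf : sum_n_m (fun l => (V (S l) - V l) ^ 2) 0 (M - 1) <= INR M * A + 2 * B).
  { replace (M - 1)%nat with (S (M - 2)) by lia.
    rewrite sumR_first, sumR_last by lia.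
    replace (S (M - 2)) with (M - 1)%nat by lia; replace (S (M - 1)) with M by lia.
    rewrite V0, VM.
    assert (Hfirst := Vval 1%nat ltac:(lia)).
    assert (Hlast := Vval (M - 1)%nat ltac:(lia)).
    assert (Hmid : sum_n_m (fun l => (V (S l) - V l) ^ 2) 1 (M - 2) <= INR M * A).
    { apply Rle_trans with (sum_n_m (fun _ => A) 1 (M - 2)).
      - apply sumR_le; intros l Hl; apply Vinc; lia.
      - rewrite sumR_const; apply Rmult_le_compat_r; [lra | apply le_INR; lia]. }
    replace ((V 1%nat - 0) ^ 2) with (V 1%nat ^ 2) by ring.
    replace ((0 - V (M - 1)%nat) ^ 2) with (V (M - 1)%nat ^ 2) by ring.
    lra. }
  lra.
Qed.

End Mesh.

Lemma continuous_sum_n_m (g : nat -> R -> R) a b x :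
  (forall l, continuous (g l) x) -> continuous (fun t => sum_n_m (fun l => g l t) a b) x.
Proof.
  intros Hg; induction b as [|b IH].
  - destruct a.
    + apply (continuous_ext (g 0%nat)); [intros; rewrite sum_n_n; reflexivity | apply Hg].
    + apply (continuous_ext (fun _ => 0)); [intros; rewrite sumR_empty by lia; reflexivity|].
      apply continuous_const.
  - destruct (Nat.le_gt_cases a (S b)).
    + apply (continuous_ext (fun t => sum_n_m (fun l => g l t) a b + g (S b) t)).
      * intros; rewrite sumR_last by lia; reflexivity.
      * apply (continuous_plus (fun t => sum_n_m (fun l => g l t) a b) (g (S b))); auto.
    + apply (continuous_ext (fun _ => 0)); [intros; rewrite sumR_empty by lia; reflexivity|].
      apply continuous_const.
Qed.

Lemma continuous_ek k x : continuous (ek k) x.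
Proof.
  apply (continuous_mult (fun _ => sqrt 2) (fun y => sin (PI * INR k * y))).
  - apply continuous_const.
  - apply continuous_sin_comp, (continuous_mult (fun _ => PI * INR k) (fun y => y)).
    + apply continuous_const.
    + apply continuous_id.
Qed.

Lemma ex_RInt_of_continuous (g : R -> R) a b : (forall y, continuous g y) -> ex_RInt g a b.
Proof. intros; apply (ex_RInt_continuous (V := R_CompleteNormedModule)); auto. Qed.

Lemma continuous_translate (f : R -> R) c x :
  (forall y, continuous f y) -> continuous (fun t => f (c + t)) x.
Proof.
  intros Hf; apply (continuous_comp (fun t => c + t) f); [|apply Hf].
  apply (continuous_plus (fun _ => c) (fun t => t)); [apply continuous_const | apply continuous_id].
Qed.

Lemma RInt_cells (f : R -> R) (h : R) (n : nat) : (forall y, continuous f y) ->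
  RInt f 0 (INR (S n) * h) = RInt (fun t => sum_n_m (fun l => f (INR l * h + t)) 0 n) 0 h.
Proof.
  intros Hf; induction n as [|n IH].
  - replace (INR 1 * h) with h by (simpl; ring).
    apply RInt_ext; intros; rewrite sum_n_n; simpl; f_equal; ring.
  - rewrite <- (RInt_Chasles f 0 (INR (S n) * h) (INR (S (S n)) * h))
      by (apply ex_RInt_of_continuous; auto).
    assert (Hlast : RInt f (INR (S n) * h) (INR (S (S n)) * h)
                    = RInt (fun t => f (INR (S n) * h + t)) 0 h).
    { pose proof (RInt_comp_lin f 1 (INR (S n) * h) 0 h) as C.
      replace (1 * 0 + INR (S n) * h) with (INR (S n) * h) in C by ring.
      replace (1 * h + INR (S n) * h) with (INR (S (S n)) * h) in C by (rewrite (S_INR (S n)); ring).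
      rewrite <- C by (apply ex_RInt_of_continuous; auto).
      apply RInt_ext; intros; unfold scal; simpl; unfold mult; simpl.
      rewrite Rmult_1_l; f_equal; ring. }
    rewrite IH, Hlast; change (plus ?a ?b) with (a + b).
    rewrite <- (RInt_plus (V := R_CompleteNormedModule)).
    + apply RInt_ext; intros; rewrite sumR_last by lia; reflexivity.
    + apply ex_RInt_of_continuous; intros.
      apply continuous_sum_n_m; intros; apply continuous_translate, Hf.
    + apply ex_RInt_of_continuous; intros; apply continuous_translate, Hf.
Qed.

(** Real powers with base at most [1] (Stdlib's [ln] is [0] on [(-oo, 0]],
    so no positivity of the base is needed). *)
Lemma exp_monotone x y : x <= y -> exp x <= exp y.
Proof. intros [Hlt | ->]; [left; apply exp_increasing; exact Hlt | lra]. Qed.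

Lemma ln_nonpos z : z <= 1 -> ln z <= 0.
Proof.
  intros Hz; destruct (Rlt_dec 0 z) as [Hz0|Hz0].
  - rewrite <- ln_1; apply ln_le; lra.
  - unfold ln; destruct (Rlt_dec 0 z); [contradiction | lra].
Qed.

Lemma Rpower_antitone_exponent b x y : b <= 1 -> y <= x -> Rpower b x <= Rpower b y.
Proof. intros Hb Hxy; unfold Rpower; apply exp_monotone; pose proof (ln_nonpos b Hb); nra. Qed.

Lemma Rpower_le_1 z c : z <= 1 -> 0 <= c -> Rpower z c <= 1.
Proof.
  intros Hz Hc; replace 1 with (Rpower z 0) by (unfold Rpower; rewrite Rmult_0_l; apply exp_0).
  apply Rpower_antitone_exponent; assumption.
Qed.

Lemma le_Lub_Rbar_real (E : R -> Prop) (bnd r : R) :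
  (forall x, E x -> x <= bnd) -> E r -> r <= real (Lub_Rbar E).
Proof.
  intros Hbnd Hr; destruct (Lub_Rbar_correct E) as [Hub Hlub].
  specialize (Hub r Hr).
  assert (Hle : Rbar_le (Lub_Rbar E) bnd) by (apply Hlub; intros x Hx; apply Hbnd, Hx).
  destruct (Lub_Rbar E); simpl in *; first [exact Hub | contradiction].
Qed.

(** The clamp onto [[0, 1]]: a 1-Lipschitz retraction of [R], used to turn a
    function known only on [[0, 1]] into one continuous everywhere. *)
Definition clamp01 (y : R) : R := Rmax 0 (Rmin 1 y).

Lemma clamp01_range y : 0 <= clamp01 y <= 1.
Proof. unfold clamp01, Rmax, Rmin; destruct (Rle_dec 1 y), (Rle_dec 0 _); lra. Qed.

Lemma clamp01_id y : 0 <= y <= 1 -> clamp01 y = y.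
Proof. intros; unfold clamp01, Rmax, Rmin; destruct (Rle_dec 1 y), (Rle_dec 0 _); lra. Qed.

Lemma clamp01_lipschitz x y : Rabs (clamp01 x - clamp01 y) <= Rabs (x - y).
Proof.
  unfold clamp01, Rmax, Rmin; destruct (Rle_dec 1 x), (Rle_dec 1 y);
  repeat match goal with |- context [Rle_dec ?a ?b] => destruct (Rle_dec a b) end;
  unfold Rabs; repeat match goal with |- context [Rcase_abs ?t] => destruct (Rcase_abs t) end;
  lra.
Qed.

Section Hoelder.

Variables (beta : R) (H : R -> R).
Hypothesis beta_pos : 0 < beta.
Hypothesis H_holder : in_holder beta H.

Lemma holder_clamp_continuous x : continuous (fun y => H (clamp01 y)) x.
Proof.
  destruct H_holder as [L HL].
  apply continuity_pt_filterlim; intros eps Heps.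
  set (L0 := Rabs L + 1).
  assert (HL0 : 0 < L0) by (unfold L0; pose proof (Rabs_pos L); lra).
  exists (Rpower (eps / L0) (/ beta)); split; [apply exp_pos|].
  intros y [_ Hy]; simpl in *; unfold R_dist in *.
  destruct (Req_dec (clamp01 y) (clamp01 x)) as [E|E].
  - rewrite E, Rminus_diag, Rabs_R0; lra.
  - assert (0 < Rabs (clamp01 y - clamp01 x)) by (apply Rabs_pos_lt; lra).
    pose proof (clamp01_lipschitz y x).
    eapply Rle_lt_trans; [apply HL; apply clamp01_range|].
    apply Rle_lt_trans with (L0 * Rpower (Rabs (clamp01 y - clamp01 x)) beta).
    + apply Rmult_le_compat_r; [left; apply exp_pos|].
      unfold L0; pose proof (Rle_abs L); lra.
    + apply Rlt_le_trans with (L0 * Rpower (Rpower (eps / L0) (/ beta)) beta).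
      * apply Rmult_lt_compat_l; [exact HL0|]; apply Rlt_Rpower_l; [exact beta_pos | lra].
      * rewrite Rpower_mult, Rinv_l, Rpower_1 by (apply Rdiv_lt_0_compat || lra; lra).
        right; field; lra.
Qed.

(** The sup norm dominates [|H|] on [[0, 1]] (its defining set is bounded
    by [|H 0| + L]). *)
Lemma supnorm_bound x : 0 <= x <= 1 -> Rabs (H x) <= supnorm H.
Proof.
  destruct H_holder as [L HL]; intros Hx.
  apply (le_Lub_Rbar_real _ (Rabs (H 0) + Rabs L)); [|exists x; split; auto].
  intros r [z [Hz ->]].
  assert (Hpow : Rpower (Rabs (z - 0)) beta <= 1)
    by (apply Rpower_le_1; [rewrite Rminus_0_r, Rabs_right | ]; lra).
  assert (Hinc : Rabs (H z - H 0) <= Rabs L).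
  { eapply Rle_trans; [apply HL; lra|].
    apply Rle_trans with (Rabs L * Rpower (Rabs (z - 0)) beta).
    - apply Rmult_le_compat_r; [left; apply exp_pos | apply Rle_abs].
    - rewrite <- (Rmult_1_r (Rabs L)) at 2; apply Rmult_le_compat_l; [apply Rabs_pos | lra]. }
  replace (H z) with (H 0 + (H z - H 0)) by ring.
  eapply Rle_trans; [apply Rabs_triang | lra].
Qed.

(** The Hoelder seminorm is the best constant (its defining set of
    difference quotients is bounded by [|L|]). *)
Lemma holder_seminorm_bound x y : 0 <= x <= 1 -> 0 <= y <= 1 -> x <> y ->
  Rabs (H x - H y) <= holder_seminorm beta H * Rpower (Rabs (x - y)) beta.
Proof.
  destruct H_holder as [L HL]; intros Hx Hy Hxy.
  assert (Hp : forall x y, 0 < Rpower (Rabs (x - y)) beta) by (intros; apply exp_pos).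
  assert (Hq : Rabs (H x - H y) / Rpower (Rabs (x - y)) beta <= holder_seminorm beta H).
  { apply (le_Lub_Rbar_real _ (Rabs L)); [|exists x, y; repeat split; auto; lra].
    intros r [x' [y' [Hx' [Hy' [_ ->]]]]].
    apply Rle_trans with (Rabs L * Rpower (Rabs (x' - y')) beta / Rpower (Rabs (x' - y')) beta).
    - apply Rmult_le_compat_r; [left; apply Rinv_0_lt_compat, Hp|].
      eapply Rle_trans; [apply HL; auto|].
      apply Rmult_le_compat_r; [left; apply Hp | apply Rle_abs].
    - right; field; apply Rgt_not_eq, Hp. }
  apply (Rmult_le_compat_r (Rpower (Rabs (x - y)) beta)) in Hq; [|left; apply Hp].
  unfold Rdiv in Hq; rewrite Rmult_assoc, Rinv_l, Rmult_1_r in Hq by apply Rgt_not_eq, Hp.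
  exact Hq.
Qed.

Lemma holder_seminorm_nonneg : 0 <= holder_seminorm beta H.
Proof.
  pose proof (holder_seminorm_bound 0 1 ltac:(lra) ltac:(lra) ltac:(lra)).
  pose proof (exp_pos (beta * ln (Rabs (0 - 1)))).
  pose proof (Rabs_pos (H 0 - H 1)).
  destruct (Rle_lt_dec 0 (holder_seminorm beta H)); [assumption|].
  unfold Rpower in *; nra.
Qed.

Lemma holder_norm_bounds_values (K : R) : holder_norm beta H <= K ->
  forall x, 0 <= x <= 1 -> H x ^ 2 <= K ^ 2.
Proof.
  intros HK x Hx; unfold holder_norm in HK.
  pose proof (supnorm_bound x Hx); pose proof holder_seminorm_nonneg.
  rewrite <- (pow2_abs (H x)); apply pow_incr; split; [apply Rabs_pos | lra].
Qed.

Lemma holder_norm_bounds_oscillation (K h : R) : holder_norm beta H <= K -> 0 < h ->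
  forall x y, 0 <= x <= 1 -> 0 <= y <= 1 -> Rabs (x - y) <= h ->
  (H x - H y) ^ 2 <= (K * Rpower h beta) ^ 2.
Proof.
  intros HK Hh x y Hx Hy Hxy; unfold holder_norm in HK.
  assert (Hsup : 0 <= supnorm H) by (eapply Rle_trans; [apply Rabs_pos | apply (supnorm_bound 0); lra]).
  pose proof holder_seminorm_nonneg.
  rewrite <- (pow2_abs (H x - H y)); apply pow_incr; split; [apply Rabs_pos|].
  destruct (Req_dec x y) as [<-|Hne].
  - rewrite Rminus_diag, Rabs_R0; apply Rmult_le_pos; [lra | left; apply exp_pos].
  - eapply Rle_trans; [apply holder_seminorm_bound; assumption|].
    apply Rmult_le_compat; [lra | left; apply exp_pos | lra|].
    apply Rle_Rpower_l; [lra | split; [apply Rabs_pos_lt; lra | exact Hxy]].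
Qed.

End Hoelder.

Section Estimate.

Variables (M : nat) (H : R -> R) (A B : R).
Hypothesis M_ge2 : (2 <= M)%nat.
Hypothesis H_continuous : forall y, continuous (fun y => H (clamp01 y)) y.
Hypothesis H_bound : forall x, 0 <= x <= 1 -> H x ^ 2 <= B.
Hypothesis H_oscillation : forall x y, 0 <= x <= 1 -> 0 <= y <= 1 ->
  Rabs (x - y) <= / INR M -> (H x - H y) ^ 2 <= A.

Local Notation P := (sine_poly M (Hcoef M H)).

Let M_pos : 0 < INR M.
Proof. apply lt_0_INR; lia. Qed.

Let B_nonneg : 0 <= B.
Proof. eapply Rle_trans; [apply pow2_ge_0 | apply (H_bound 0); lra]. Qed.

Let A_nonneg : 0 <= A.
Proof.
  eapply Rle_trans; [apply pow2_ge_0|].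
  apply (H_oscillation 0 0); [lra | lra | rewrite Rminus_0_r, Rabs_R0; left; apply Rinv_0_lt_compat, M_pos].
Qed.

Let node_range (l : nat) : (l <= M)%nat -> 0 <= node M l <= 1.
Proof.
  intros Hl; split; [apply Rle_mult_inv_pos; [apply pos_INR | exact M_pos]|].
  apply (Rmult_le_reg_r (INR M)); [exact M_pos|]; field_simplify; [apply le_INR, Hl | lra].
Qed.

Let shifted_node_range (l : nat) (t : R) : (l <= M - 1)%nat -> 0 <= t <= / INR M ->
  0 <= node M l + t <= 1.
Proof.
  intros Hl Ht; pose proof (node_range l ltac:(lia)); split; [lra|].
  assert (INR l <= INR M - 1)
    by (change 1 with (INR 1); rewrite <- minus_INR by lia; apply le_INR; lia).
  assert (node M l <= 1 - / INR M) by (apply (Rmult_le_reg_r (INR M)); [lra | field_simplify; lra]).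
  lra.
Qed.

Let P_nodes (l : nat) : (1 <= l <= M - 1)%nat -> P (node M l) = H (node M l).
Proof. apply HM_interpolates; assumption. Qed.

Let node_0 : node M 0 = 0.
Proof. simpl; field; lra. Qed.

Lemma data_increment_bound (t : R) : 0 <= t <= / INR M ->
  sum_n_m (fun l => (H (node M l + t) - P (node M l)) ^ 2) 0 (M - 1) <= INR M * A + B.
Proof.
  intros Ht; rewrite sumR_first by lia.
  assert (Hfirst : (H (node M 0 + t) - P (node M 0)) ^ 2 <= B).
  { pose proof (shifted_node_range 0 t ltac:(lia) Ht) as Hr.
    rewrite node_0, sine_poly_at_0, Rminus_0_r in *; apply H_bound, Hr. }
  assert (Hrest : sum_n_m (fun l => (H (node M l + t) - P (node M l)) ^ 2) 1 (M - 1) <= INR M * A).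
  { apply Rle_trans with (sum_n_m (fun _ => A) 1 (M - 1)).
    - apply sumR_le; intros l Hl; rewrite P_nodes by lia.
      apply H_oscillation; [apply shifted_node_range; [lia | exact Ht] | apply node_range; lia|].
      replace (node M l + t - node M l) with t by ring; rewrite Rabs_right; lra.
    - rewrite sumR_const; apply Rmult_le_compat_r; [lra | apply le_INR; lia]. }
  lra.
Qed.

(** Increments of the interpolant over one cell: by monotonicity of the
    increment energy in the shift they are dominated by the increments
    between consecutive nodes, i.e. by the oscillation of the data. *)
Lemma interpolant_increment_bound (t : R) : 0 <= t <= / INR M ->
  sum_n_m (fun l => (P (node M l + t) - P (node M l)) ^ 2) 0 (M - 1) <= 2 * INR M * A + 4 * B.
Proof.
  intros Ht.
  apply Rle_trans with (sum_n_m (fun l => (P (node M l + t) - P (node M l)) ^ 2) 0 (2 * M - 1)).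
  { rewrite (sum_n_m_Chasles _ 0 (M - 1) (2 * M - 1)) by lia.
    change (plus ?x ?y) with (x + y).
    assert (0 <= sum_n_m (fun l => (P (node M l + t) - P (node M l)) ^ 2) (S (M - 1)) (2 * M - 1))
      by (apply sumR_nonneg; intros; apply pow2_ge_0).
    lra. }
  eapply Rle_trans; [apply increment_energy_mono; assumption|].
  rewrite (sumR_ext _ (fun l => (P (node M (S l)) - P (node M l)) ^ 2)).
  2: { intros l _; rewrite S_INR; do 3 f_equal; field; lra. }
  apply (grid_increment_bound M M_ge2 (fun l => P (node M l))); auto.
  - rewrite node_0; apply sine_poly_at_0.
  - simpl; replace (INR M / INR M) with 1 by (field; lra); apply sine_poly_at_1.
  - intros l Hl; apply sine_poly_reflect; lia.
  - intros l Hl; rewrite P_nodes by lia; apply H_bound, node_range; lia.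
  - intros l Hl1 Hl2; rewrite !P_nodes by lia.
    apply H_oscillation; [apply node_range; lia | apply node_range; lia|].
    rewrite S_INR; replace ((INR l + 1) / INR M - INR l / INR M) with (/ INR M) by (field; lra).
    rewrite Rabs_right; [lra | left; apply Rinv_0_lt_compat, M_pos].
Qed.

(** The squared error summed over the [M] translates of a point of the first
    cell, via [(a - b)^2 <= 2 (a - c)^2 + 2 (b - c)^2] with [c = P(y_l)]. *)
Lemma cell_error_bound (t : R) : 0 <= t <= / INR M ->
  sum_n_m (fun l => (H (node M l + t) - P (node M l + t)) ^ 2) 0 (M - 1)
  <= 6 * INR M * A + 10 * B.
Proof.
  intros Ht.
  apply Rle_trans with (sum_n_m (fun l => 2 * (H (node M l + t) - P (node M l)) ^ 2
                                          + 2 * (P (node M l + t) - P (node M l)) ^ 2) 0 (M - 1)).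
  - apply sumR_le; intros l _.
    pose proof (pow2_ge_0 (H (node M l + t) - P (node M l) + (P (node M l + t) - P (node M l)))).
    nra.
  - rewrite sumR_plus, !sumR_scal_l.
    pose proof (data_increment_bound t Ht); pose proof (interpolant_increment_bound t Ht).
    lra.
Qed.

(** Integrating over [[0, 1]] = M cells of width [1/M]. *)
Theorem interpolation_error_bound :
  L2norm_sq (fun y => H y - HM M H y) <= 6 * A + 10 * B / INR M.
Proof.
  set (err := fun y => (H (clamp01 y) - HM M H y) ^ 2).
  assert (Herr : forall y, continuous err y).
  { intros y; unfold err; simpl pow.
    assert (Hdiff : continuous (fun y => H (clamp01 y) - HM M H y) y).
    { apply (continuous_minus (fun y => H (clamp01 y)) (HM M H)); [apply H_continuous|].
      apply continuous_sum_n_m; intros k.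
      apply (continuous_scal_r (Hcoef M H k) (ek k)), continuous_ek. }
    apply (continuous_mult (fun y => H (clamp01 y) - HM M H y)); [exact Hdiff|].
    apply (continuous_mult (fun y => H (clamp01 y) - HM M H y)); [exact Hdiff | apply continuous_const]. }
  assert (Hcells : L2norm_sq (fun y => H y - HM M H y)
                   = RInt (fun t => sum_n_m (fun l => err (INR l * / INR M + t)) 0 (M - 1)) 0 (/ INR M)).
  { unfold L2norm_sq; rewrite <- RInt_cells by exact Herr.
    replace (INR (S (M - 1)) * / INR M) with 1 by (replace (S (M - 1)) with M by lia; field; lra).
    apply RInt_ext; intros x Hx; rewrite Rmin_left, Rmax_right in Hx by lra.
    unfold err; rewrite clamp01_id by lra; reflexivity. }
  rewrite Hcells.
  apply Rle_trans with (RInt (fun _ => 6 * INR M * A + 10 * B) 0 (/ INR M)).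
  - apply RInt_le; [left; apply Rinv_0_lt_compat, M_pos | | |].
    + apply ex_RInt_of_continuous; intros.
      apply continuous_sum_n_m; intros; apply continuous_translate, Herr.
    + apply ex_RInt_of_continuous; intros; apply continuous_const.
    + intros t Ht; eapply Rle_trans; [|apply (cell_error_bound t); lra].
      right; apply sumR_ext; intros l Hl; unfold err.
      rewrite clamp01_id by (apply shifted_node_range; lia || lra); reflexivity.
  - rewrite RInt_const; unfold scal; simpl; unfold mult; simpl.
    right; field; lra.
Qed.

End Estimate.

(** The rate exponent [g = 8 alpha^2 / (4 alpha + 1)] is at most [4 alpha]
    and at most [1], so for [delta <= 1] both [delta^{4 alpha}] and [delta]
    are dominated by [delta^g]. *)
Lemma rate_exponent_dominates (alpha delta : R) : 0 < alpha < 1 / 2 -> 0 < delta <= 1 ->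
  Rpower delta (2 * alpha) ^ 2 <= Rpower delta (8 * alpha ^ 2 / (4 * alpha + 1))
  /\ delta <= Rpower delta (8 * alpha ^ 2 / (4 * alpha + 1)).
Proof.
  intros Ha Hd; set (g := 8 * alpha ^ 2 / (4 * alpha + 1)).
  assert (Hg4 : g <= 2 * alpha + 2 * alpha).
  { assert (2 * alpha + 2 * alpha - g = (8 * alpha ^ 2 + 4 * alpha) / (4 * alpha + 1))
      by (unfold g; field; lra).
    assert (0 <= (8 * alpha ^ 2 + 4 * alpha) / (4 * alpha + 1)) by (apply Rle_mult_inv_pos; nra).
    lra. }
  assert (Hg1 : g <= 1).
  { assert (1 - g = (4 * alpha + 1 - 8 * alpha ^ 2) / (4 * alpha + 1)) by (unfold g; field; lra).
    assert (0 <= (4 * alpha + 1 - 8 * alpha ^ 2) / (4 * alpha + 1)) by (apply Rle_mult_inv_pos; nra).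
    lra. }
  split.
  - simpl pow; rewrite Rmult_1_r, <- Rpower_plus.
    apply Rpower_antitone_exponent; [lra | exact Hg4].
  - rewrite <- (Rpower_1 delta) at 1 by lra.
    apply Rpower_antitone_exponent; [lra | exact Hg1].
Qed.

Theorem lemma5p5 (theta alpha : R) :
  0 < theta -> 0 < alpha < 1 / 2 ->
  exists C : R, 0 < C /\
    forall (H : R -> R) (M : nat),
      (2 <= M)%nat ->
      in_holder (2 * alpha) H -> in_D theta alpha H ->
      let K := Rmax (Rmax (supnorm H) (holder_norm (2 * alpha) H))
                    (Dnorm theta alpha H) in
      L2norm_sq (fun y => H y - HM M H y)
        <= C * K ^ 2 * Rpower (/ INR M) (8 * alpha ^ 2 / (4 * alpha + 1)).
Proof.
  intros _ Halpha; exists 16; split; [lra|].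
  intros H M HM2 Hholder _ K.
  assert (Hbeta : 0 < 2 * alpha) by lra.
  assert (HK : holder_norm (2 * alpha) H <= K)
    by (unfold K; eapply Rle_trans; [apply Rmax_r | apply Rmax_l]).
  assert (Hdelta : 0 < / INR M <= 1).
  { split; [apply Rinv_0_lt_compat, lt_0_INR; lia|].
    rewrite <- Rinv_1; apply Rinv_le_contravar; [lra | apply (le_INR 1); lia]. }
  destruct (rate_exponent_dominates alpha (/ INR M) Halpha Hdelta) as [Hrate1 Hrate2].
  eapply Rle_trans.
  - apply (interpolation_error_bound M H ((K * Rpower (/ INR M) (2 * alpha)) ^ 2) (K ^ 2) HM2).
    + apply (holder_clamp_continuous (2 * alpha)); assumption.
    + apply (holder_norm_bounds_values (2 * alpha)); assumption.
    + apply (holder_norm_bounds_oscillation (2 * alpha)); [assumption.. | lra].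
  - pose proof (pow2_ge_0 K).
    replace (6 * (K * Rpower (/ INR M) (2 * alpha)) ^ 2 + 10 * K ^ 2 / INR M)
      with (6 * K ^ 2 * Rpower (/ INR M) (2 * alpha) ^ 2 + 10 * K ^ 2 * / INR M)
      by (field; apply not_0_INR; lia).
    nra.
Qed.
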